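(* Let $T=(V,E)$ be a finite rooted tree, $\Pr$ a probability distribution over a finite set of queries, $k$ a positive integer, and let $R^*$ be an optimal solution to the problem of maximizing the benefit $B(R)$ over all $R\subseteq V$ with $|R|\le k$. Let $u\in V$ and let $v\in A(u)\cup\{\epsilon\}$ be the lowest ancestor of $u$ that belongs to $R^*$ (with $v=\epsilon$ if no proper ancestor of $u$ belongs to $R^*$). Let $R^*_u=T(u)\cap R^*$ and $\kappa^*_u=|T(u)\cap R^*|$. Then $R^*_u$ maximizes $B_u(R_u\cup\{v\})$ over all $R_u\subseteq T(u)$ with $|R_u|=\kappa^*_u$, i.e. $$R^*_u\in\arg\max_{R_u\subseteq T(u),\ |R_u|=\kappa^*_u} B_u(R_u\cup\{v\}).$$
   Context: $T=(V,E)$ is a finite rooted tree. $T(u)$ is the set of nodes of the subtree rooted at $u$ (including $u$); $A(u)$ is the set of proper ancestors of $u$. Each non-leaf node is associated with a variable of a finite set $X$; $\mathrm{vars}(u)$ is the set of variables associated with nodes of $T(u)$. Each query $q$ determines $Z_q\subseteq X$. For $R\subseteq V$, $w\in V$: $I_q(w,R)=1$ iff $w\in R$, $\mathrm{vars}(w)\subseteq Z_q$, and no $x\in A(w)\cap R$ has $\mathrm{vars}(x)\subseteq Z_q$; else $0$; $\mathbb{E}[I(w,R)]=\sum_q\Pr(q)I_q(w,R)$. Nodes have partial costs $c(x)$; total cost $C(w)=\sum_{x\in T(w)}c(x)$. Benefit: $B(R)=\sum_{w\in R}\mathbb{E}[I(w,R)]C(w)$. Partial benefit: $B_u(R)=\sum_{w\in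 R\cap T(u)}\mathbb{E}[I(w,R)]C(w)$. $\epsilon$ is an auxiliary symbol not in $V$ meaning ''no ancestor''; by convention $B_u(R_u\cup\{\epsilon\}):=B_u(R_u)$. *)

From mathcomp Require Import all_boot all_order all_algebra.
Set Implicit Arguments. Unset Strict Implicit. Unset Printing Implicit Defensive.
Import Order.TTheory GRing.Theory Num.Theory.
Local Open Scope ring_scope.

Section Tree.
Variables (V : finType) (par : V -> option V).

Fixpoint pit (n : nat) (x : V) : option V :=
  match n with 0 => Some x | n'.+1 => obind par (pit n' x) end.

(* y is a proper ancestor of x (paths in an acyclic parent graph have
   length <= #|V|, so the bound is harmless) *)
Definition anc (y x : V) : bool :=
  [exists n : 'I_#|V|.+1, (0 < (n : nat))%N && (pit n x == Some y)].

Definition is_rooted_tree : Prop :=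
  (exists r, forall x, par x = None <-> x = r) /\ (forall x, ~~ anc x x).

Definition subtree (u : V) : {set V} := [set w | (w == u) || anc u w].
Definition ancs (u : V) : {set V} := [set x | anc x u].
Definition is_leaf (x : V) : bool := [forall y, par y != Some x].

Variables (X : finType) (var : V -> X).
Definition vars (u : V) : {set X} :=
  [set var w | w in [set w in subtree u | ~~ is_leaf w]].

Variables (Q : finType) (Z : Q -> {set X}) (R : realFieldType)
  (Pr : Q -> R) (c : V -> R).

Definition Iq (q : Q) (w : V) (S : {set V}) : bool :=
  [&& w \in S, vars w \subset Z q &
      [forall x in ancs w :&: S, ~~ (vars x \subset Z q)]].

Definition EI (w : V) (S : {set V}) : R := \sum_q Pr q * (Iq q w S)%:R.

Definition Ctot (w : V) : R := \sum_(x in subtree w) c x.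

Definition benefit (S : {set V}) : R := \sum_(w in S) EI w S * Ctot w.

Definition pbenefit (u : V) (S : {set V}) : R :=
  \sum_(w in S :&: subtree u) EI w S * Ctot w.

(* B_u(R_u ∪ {v}) with v = None encoding epsilon *)
Definition pbenefit_opt (u : V) (S : {set V}) (v : option V) : R :=
  pbenefit u (match v with Some x => x |: S | None => S end).
End Tree.

From mathcomp Require Import all_boot all_order all_algebra.
Import Order.TTheory GRing.Theory Num.Theory.
Set Implicit Arguments. Unset Strict Implicit. Unset Printing Implicit Defensive.
Local Open Scope ring_scope.

(* Replace the part of Rstar inside T(u) by any R_u of the same size; the
   resulting set S is still feasible.  Nodes outside T(u) have no ancestor
   inside T(u), so their contribution to B is unchanged, hence
   B(S) - B(Rstar) = B_u(S) - B_u(Rstar) and optimality of Rstar bounds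
   B_u(S) by B_u(Rstar).  It remains to see B_u(S) = B_u(R_u + v): for w in
   R_u, the ancestors of w in S outside T(u) are the ancestors of u in Rstar,
   and since vars grows towards the root, one of them has vars inside Z_q iff
   the lowest one, v, has. *)

Section Ancestry.
Variables (V : finType) (par : V -> option V).
Hypothesis acyclic : forall x, ~~ anc par x x.

Lemma pitD m n x : pit par (m + n) x = obind (pit par m) (pit par n x).
Proof. by elim: m => [|m IHm] /=; [case: pit | rewrite IHm; case: pit]. Qed.

Lemma pit_sub m n x y : (n <= m)%N -> pit par n x = Some y ->
  pit par m x = pit par (m - n) y.
Proof. by move=> le_nm pit_n; rewrite -(subnK le_nm) pitD pit_n /= addnK. Qed.

(* A parent chain longer than #|V| revisits a node, which closes a cycle. *)
Lemma pit_le_card n x y : pit par n x = Some y -> (n <= #|V|)%N.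
Proof.
move=> pit_n; rewrite leqNgt; apply/negP => lt_Vn.
have pit_defined i : (i <= n)%N -> exists z, pit par i x = Some z.
  move=> le_in; case pit_i: (pit par i x) => [z|]; first by exists z.
  by move: pit_n; rewrite -(subnK le_in) pitD pit_i.
pose f (i : 'I_#|V|.+1) := odflt x (pit par i x).
have /injectivePn [i [j neq_ij f_ij]] : ~~ injectiveb f.
  by apply/injectiveP => /leq_card; rewrite card_ord ltnn.
wlog lt_ij : i j neq_ij f_ij / (i < j)%N.
  move=> gen; case: (ltngtP i j) => [|lt_ji|/val_inj eq_ij]; first exact: gen.
    by apply: (gen j i); rewrite // eq_sym.
  by rewrite eq_ij eqxx in neq_ij.
have [zi pit_i] := pit_defined i (ltnW (leq_trans (ltn_ord i) lt_Vn)).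
have [zj pit_j] := pit_defined j (ltnW (leq_trans (ltn_ord j) lt_Vn)).
move: f_ij; rewrite /f pit_i pit_j /= => zij; subst zj.
case/negP: (acyclic zi); apply/existsP.
have lt_ji : (j - i < #|V|.+1)%N by rewrite (leq_ltn_trans (leq_subr _ _)).
exists (Ordinal lt_ji); rewrite /= subn_gt0 lt_ij.
by rewrite -(pit_sub (ltnW lt_ij) pit_i) pit_j eqxx.
Qed.

Lemma ancP y x :
  reflect (exists2 n, (0 < n)%N & pit par n x = Some y) (anc par y x).
Proof.
apply: (iffP existsP) => [[n /andP [n_gt0 /eqP pit_n]]|[n n_gt0 pit_n]].
  by exists n.
have lt_nV : (n < #|V|.+1)%N by rewrite ltnS (pit_le_card pit_n).
by exists (Ordinal lt_nV); rewrite n_gt0 pit_n /=.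
Qed.

Lemma subtreeP u w :
  reflect (exists n, pit par n w = Some u) (w \in subtree par u).
Proof.
rewrite inE; apply: (iffP orP) => [[/eqP ->|/ancP [n _ pit_n]]|[[|n] pit_n]].
- by exists 0%N.
- by exists n.
- by left; case: pit_n => ->.
- by right; apply/ancP; exists n.+1.
Qed.

Lemma anc_subtree u w x : w \in subtree par u -> anc par x u -> anc par x w.
Proof.
move=> /subtreeP [m pit_m] /ancP [n n_gt0 pit_n]; apply/ancP.
by exists (n + m)%N; rewrite ?addn_gt0 ?n_gt0 // pitD pit_m.
Qed.

Lemma subtree_anc u w x :
  anc par x w -> x \in subtree par u -> w \in subtree par u.
Proof.
move=> /ancP [n _ pit_n] /subtreeP [m pit_m]; apply/subtreeP.
by exists (m + n)%N; rewrite pitD pit_n.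
Qed.

Lemma subtree_trans u w : w \in subtree par u ->
  subtree par w \subset subtree par u.
Proof.
move=> /subtreeP [m pit_m]; apply/subsetP => x /subtreeP [n pit_n].
by apply/subtreeP; exists (m + n)%N; rewrite pitD pit_n.
Qed.

Lemma anc_notin_subtree u x : anc par x u -> x \notin subtree par u.
Proof.
by move=> anc_xu; apply/negP => /anc_subtree/(_ anc_xu); apply/negP/acyclic.
Qed.

Lemma anc_subtreeE u w x : w \in subtree par u -> x \notin subtree par u ->
  anc par x w = anc par x u.
Proof.
move=> w_in x_notin; apply/idP/idP; last exact: anc_subtree.
move: w_in => /subtreeP [m pit_m] /ancP [n n_gt0 pit_n].
case: (leqP n m) => [le_nm|lt_mn].
  case/negP: x_notin; apply/subtreeP.
  by exists (m - n)%N; rewrite -(pit_sub le_nm pit_n).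
apply/ancP; exists (n - m)%N; first by rewrite subn_gt0.
by rewrite -(pit_sub (ltnW lt_mn) pit_m).
Qed.
End Ancestry.

Lemma forall_in_setU (T : finType) (A B : {set T}) (P : pred T) :
  [forall x in A :|: B, P x] = [forall x in A, P x] && [forall x in B, P x].
Proof.
apply/forallP/andP => [all_AB|[/forallP all_A /forallP all_B] x].
  by split; apply/forallP => x; apply/implyP => x_in;
    apply: (implyP (all_AB x)); rewrite inE x_in ?orbT.
by apply/implyP; rewrite inE => /orP [/(implyP (all_A x))|/(implyP (all_B x))].
Qed.

Definition set_of_option (T : finType) (v : option T) : {set T} :=
  if v is Some x then [set x] else set0.

Section LowestAncestor.
Variables (V : finType) (par : V -> option V).

Definition lowest_anc_in (S : {set V}) (u : V) (v : option V) : Prop :=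
  match v with
  | None => ancs par u :&: S = set0
  | Some x => x \in ancs par u :&: S /\
      (forall y, y \in ancs par u :&: S -> y = x \/ anc par y x)
  end.

Lemma lowest_anc_in_ancs S u v :
  lowest_anc_in S u v -> set_of_option v \subset ancs par u :&: S.
Proof. by case: v => [x [x_in _]|_]; rewrite ?sub1set ?sub0set. Qed.

Lemma lowest_anc_forall S u v (P : pred V) :
  (forall x y, anc par y x -> P y -> P x) -> lowest_anc_in S u v ->
  [forall y in ancs par u :&: S, ~~ P y] = [forall y in set_of_option v, ~~ P y].
Proof.
move=> P_desc; case: v => [x [x_in lowest]|->] //.
apply/forallP/forallP => [not_P y|not_Px y]; apply/implyP.
  by rewrite inE => /eqP ->; exact: (implyP (not_P x)).
move=> /lowest [->|anc_yx]; first by move: (not_Px x); rewrite inE eqxx.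
by apply: contraNN (implyP (not_Px x) (set11 x)); apply: P_desc.
Qed.
End LowestAncestor.

Section Replacement.
Variables (V : finType) (par : V -> option V).
Hypothesis acyclic : forall x, ~~ anc par x x.
Variables (X : finType) (var : V -> X) (Q : finType) (Z : Q -> {set X})
  (R : realFieldType) (Pr : Q -> R) (c : V -> R).
Variables (Rstar : {set V}) (u : V).

Local Notation T := (subtree par u).
Local Notation EI := (EI par var Z Pr).
Local Notation benefit := (benefit par var Z Pr c).
Local Notation pbenefit := (pbenefit par var Z Pr c).

Lemma vars_anc x y : anc par y x -> vars par var x \subset vars par var y.
Proof.
move=> anc_yx; have x_in : x \in subtree par y by rewrite inE anc_yx orbT.
apply: imsetS; apply/subsetP => w /setIdP [w_in not_leaf].
by apply/setIdP; split; first exact: subsetP (subtree_trans acyclic x_in) _ w_in.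
Qed.

Lemma benefit_split_subtree S : benefit S =
  \sum_(w in S | w \notin T) EI w S * Ctot par c w + pbenefit u S.
Proof.
rewrite /benefit (bigID (mem T)) /= addrC; congr (_ + _).
by apply: eq_bigl => w; rewrite in_setI.
Qed.

Definition replace_subtree (Ru : {set V}) : {set V} := (Rstar :\: T) :|: Ru.

Lemma replace_subtree_self : replace_subtree (T :&: Rstar) = Rstar.
Proof. by rewrite /replace_subtree setUC setIC setID. Qed.

Lemma card_replace_subtree (Ru : {set V}) :
  #|Ru| = #|T :&: Rstar| -> (#|replace_subtree Ru| <= #|Rstar|)%N.
Proof.
move=> card_Ru; apply: leq_trans (leq_card_setU _ _) _.
by rewrite card_Ru setIC addnC cardsID.
Qed.

Section ReplacedPart.
Variable Ru : {set V}.
Hypothesis Ru_sub : Ru \subset T.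

Lemma in_replace_subtree x :
  (x \in replace_subtree Ru) = if x \in T then x \in Ru else x \in Rstar.
Proof.
rewrite in_setU in_setD; case: ifP => x_T; rewrite ?andFb ?andTb ?orFb //.
by rewrite (contraFF (subsetP Ru_sub x) x_T) orbF.
Qed.

Lemma replace_subtreeIT : replace_subtree Ru :&: T = Ru.
Proof.
apply/setP => x; rewrite in_setI in_replace_subtree.
case: ifP => x_T; rewrite ?andbT ?andbF //.
by rewrite (contraFF (subsetP Ru_sub x) x_T).
Qed.

Lemma ancs_replace_subtree w : w \in T ->
  ancs par w :&: replace_subtree Ru = (ancs par w :&: Ru) :|: (ancs par u :&: Rstar).
Proof.
move=> w_in; apply/setP => x; rewrite in_setU !in_setI in_replace_subtree.
case: ifP => x_T.
  have x_notin : x \notin ancs par u.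
    by rewrite inE; apply: contraTN x_T; apply: anc_notin_subtree.
  by rewrite (negbTE x_notin) orbF.
rewrite (contraFF (subsetP Ru_sub x) x_T) andbF /= !inE.
by rewrite (anc_subtreeE acyclic w_in) ?x_T.
Qed.

Lemma Iq_replace_subtree_out q w :
  w \notin T -> Iq par var Z q w (replace_subtree Ru) = Iq par var Z q w Rstar.
Proof.
move=> w_notin; rewrite /Iq in_replace_subtree (negbTE w_notin).
suff -> : ancs par w :&: replace_subtree Ru = ancs par w :&: Rstar by [].
apply/setP => x; rewrite !in_setI in_replace_subtree.
case: ifP => // x_T; case: (boolP (x \in ancs par w)) => //=; rewrite inE => anc_xw.
by rewrite (subtree_anc acyclic anc_xw x_T) in w_notin.
Qed.

Lemma benefit_replace_subtree : benefit (replace_subtree Ru) =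
  benefit Rstar + (pbenefit u (replace_subtree Ru) - pbenefit u Rstar).
Proof.
rewrite !benefit_split_subtree [_ - pbenefit u Rstar]addrC addrA addrK.
congr (_ + _); apply: eq_big => [w|w /andP [_ w_notin]].
  by rewrite in_replace_subtree; case: ifP; rewrite ?andbF.
by congr (_ * _); apply: eq_bigr => q _; rewrite Iq_replace_subtree_out.
Qed.

Variable v : option V.
Hypothesis lowest : lowest_anc_in par Rstar u v.

Lemma Iq_replace_subtree_in q w : w \in Ru ->
  Iq par var Z q w (set_of_option v :|: Ru) = Iq par var Z q w (replace_subtree Ru).
Proof.
move=> w_in; have w_T := subsetP Ru_sub w w_in.
have v_anc : set_of_option v \subset ancs par w.
  apply/subsetP => x /(subsetP (lowest_anc_in_ancs lowest)).
  by rewrite !inE => /andP [anc_xu _]; apply: anc_subtree anc_xu.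
rewrite /Iq ancs_replace_subtree // [_ :|: Ru]setUC setIUr (setIidPr v_anc).
rewrite !forall_in_setU (lowest_anc_forall _ lowest) => [|x y /vars_anc vars_xy]; last first.
  exact: subset_trans.
by rewrite in_setU w_in in_replace_subtree w_T w_in.
Qed.

Lemma pbenefit_opt_replace_subtree :
  pbenefit_opt par var Z Pr c u Ru v = pbenefit u (replace_subtree Ru).
Proof.
have -> : pbenefit_opt par var Z Pr c u Ru v = pbenefit u (set_of_option v :|: Ru).
  by case: (v) => //=; rewrite set0U.
have v_notin : set_of_option v :&: T = set0.
  apply/setP => x; rewrite inE in_set0; apply/negbTE/andP => [[x_v x_T]].
  move: (subsetP (lowest_anc_in_ancs lowest) x x_v); rewrite !inE => /andP [anc_xu _].
  by move: x_T; apply/negP/anc_notin_subtree.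
rewrite /pbenefit replace_subtreeIT setIUl v_notin set0U (setIidPl Ru_sub).
apply: eq_bigr => w w_in; congr (_ * _); apply: eq_bigr => q _.
by rewrite Iq_replace_subtree_in.
Qed.
End ReplacedPart.
End Replacement.

Theorem lemma3 (V : finType) (par : V -> option V) (X : finType) (var : V -> X)
  (Q : finType) (Z : Q -> {set X}) (R : realFieldType) (Pr : Q -> R) (c : V -> R)
  (k : nat) (Rstar : {set V}) (u : V) (v : option V) :
  is_rooted_tree par ->
  (forall q, 0 <= Pr q) -> \sum_q Pr q = 1 ->
  (0 < k)%N ->
  (#|Rstar| <= k)%N ->
  (forall S : {set V}, (#|S| <= k)%N ->
     benefit par var Z Pr c S <= benefit par var Z Pr c Rstar) ->
  match v with
  | None => ancs par u :&: Rstar = set0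
  | Some x => x \in ancs par u :&: Rstar /\
      (forall y, y \in ancs par u :&: Rstar -> y = x \/ anc par y x)
  end ->
  forall Ru : {set V}, Ru \subset subtree par u ->
    #|Ru| = #|subtree par u :&: Rstar| ->
    pbenefit_opt par var Z Pr c u Ru v
      <= pbenefit_opt par var Z Pr c u (subtree par u :&: Rstar) v.
Proof.
move=> [_ acyclic] _ _ _ card_Rstar optimal lowest Ru Ru_sub card_Ru.
have replaceE := pbenefit_opt_replace_subtree acyclic var Z Pr c _ lowest.
rewrite replaceE // replaceE ?subsetIl // replace_subtree_self.
have := optimal _ (leq_trans (card_replace_subtree card_Ru) card_Rstar).
by rewrite benefit_replace_subtree // gerDl subr_le0.
Qed.
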